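(* A random joint choice rule $p$ on a finite set $X$ is consistent with consumption dependent random utility if and only if it satisfies complete monotonicity and marginality.
   Context: $X$ is finite, $\mathcal{X}$ the nonempty subsets of $X$, $\mathcal{L}(X)$ the linear orders on $X$, $N(x,A)=\{\succ: x\succ y\ \forall y\in A\setminus\{x\}\}$. A random joint choice rule assigns to each $A,B\in\mathcal{X}$ and $(x,y)\in A\times B$ a number $p(x,y,A,B)\ge0$ with $\sum_{x\in A}\sum_{y\in B}p(x,y,A,B)=1$. Its Möbius inverse $q$ is defined by $p(x,y,A,B)=\sum_{A\subseteq A'\subseteq X}\sum_{B\subseteq B'\subseteq X}q(x,y,A',B')$. $p$ is consistent with consumption dependent random utility if there exist $\nu\in\Delta(\mathcal{L}(X))$ and a transition function $t:X\times\mathcal{L}(X)\to\Delta(\mathcal{L}(X))$ (writing $t_{\succ'}(x,\succ)$ for the probability of $\succ'$) with $p(x,y,A,B)=\sum_{\succ\in N(x,A)}\sum_{\succ'\in N(y,B)}\nu(\succ)t_{\succ'}(x,\succ)$ for all $A,B\in\mathcal{X}$, $(x,y)\in A\times B$. Complete monotonicity: $q(x,y,A,B)\ge 0$ for all $A,B\in\mathcal{X}$, $(x,y)\in A\times B$. Marginality: for all $A,B,C\in\mathcal{X}$ and $x\in A$, $\sum_{y\in B}p(x,y,A,B)=\sum_{y\in C}p(x,y,A,C)$. *)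

From HB Require Import structures.
From mathcomp Require Import all_boot all_order all_algebra.
From mathcomp Require Import reals.
Set Implicit Arguments. Unset Strict Implicit. Unset Printing Implicit Defensive.
Import Order.TTheory GRing.Theory Num.Theory.
Local Open Scope ring_scope.

(* A (strict) linear order on X, encoded by its graph f (x,y) = "x ≻ y". *)
Definition is_linord (X : finType) (f : {ffun X * X -> bool}) : bool :=
  [&& [forall x, ~~ f (x, x)],
      [forall x, forall y, forall z, f (x, y) && f (y, z) ==> f (x, z)] &
      [forall x, forall y, (x != y) ==> f (x, y) || f (y, x)]].

Definition linord (X : finType) := {f : {ffun X * X -> bool} | is_linord f}.

Definition lgt (X : finType) (s : linord X) (x y : X) : bool := val s (x, y).

Definition Nset (X : finType) (x : X) (A : {set X}) : pred (linord X) :=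
  fun s => [forall y in A, (y != x) ==> lgt s x y].

(* A random joint choice rule: p x y A B, meaningful for nonempty A, B,
   x ∈ A, y ∈ B. *)
Definition is_rjcr (X : finType) (R : realType)
  (p : X -> X -> {set X} -> {set X} -> R) : Prop :=
  forall A B : {set X}, A != set0 -> B != set0 ->
    (forall x y, x \in A -> y \in B -> 0 <= p x y A B) /\
    \sum_(x in A) \sum_(y in B) p x y A B = 1.

(* Möbius inverse q of p (the unique solution of
   p(x,y,A,B) = Σ_{A ⊆ A'} Σ_{B ⊆ B'} q(x,y,A',B')), given explicitly. *)
Definition mobius (X : finType) (R : realType)
  (p : X -> X -> {set X} -> {set X} -> R) x y (A B : {set X}) : R :=
  \sum_(A' : {set X} | A \subset A') \sum_(B' : {set X} | B \subset B')
     (-1) ^+ (#|A' :\: A| + #|B' :\: B|) * p x y A' B'.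

Definition complete_monotonicity (X : finType) (R : realType)
  (p : X -> X -> {set X} -> {set X} -> R) : Prop :=
  forall A B : {set X}, A != set0 -> B != set0 ->
    forall x y, x \in A -> y \in B -> 0 <= mobius p x y A B.

Definition marginality (X : finType) (R : realType)
  (p : X -> X -> {set X} -> {set X} -> R) : Prop :=
  forall A B C : {set X}, A != set0 -> B != set0 -> C != set0 ->
    forall x, x \in A ->
      \sum_(y in B) p x y A B = \sum_(y in C) p x y A C.

Definition cdru_consistent (X : finType) (R : realType)
  (p : X -> X -> {set X} -> {set X} -> R) : Prop :=
  exists (nu : linord X -> R) (t : X -> linord X -> linord X -> R),
    (forall s, 0 <= nu s) /\ \sum_s nu s = 1 /\
    (forall x s s', 0 <= t x s s') /\
    (forall x s, \sum_s' t x s s' = 1) /\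
    (forall A B : {set X}, A != set0 -> B != set0 ->
      forall x y, x \in A -> y \in B ->
        p x y A B = \sum_(s | Nset x A s) \sum_(s' | Nset y B s')
                      nu s * t x s s').

From mathcomp Require Import all_boot all_order all_algebra.
From mathcomp Require Import reals.
From mathcomp Require Import zify ring lra.
Set Implicit Arguments. Unset Strict Implicit. Unset Printing Implicit Defensive.
Import Order.TTheory GRing.Theory Num.Theory.
Local Open Scope ring_scope.

(* Write L(≻, x) = {x} ∪ {y | x ≻ y}, so that ≻ ∈ N(x, A) iff A ⊆ L(≻, x).  For a
   consumption dependent random utility, p(x, y, A, B) is then the sum over A' ⊇ A and
   B' ⊇ B of the probability that L(≻, x) = A' and L(≻', y) = B'; this probability is
   the Möbius inverse q, hence q ≥ 0.  Marginality holds because exactly one y ∈ B is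
   ≻'-best in B.
   Conversely, by marginality q1(x, A) = Σ_y q(x, y, A, X) is the Möbius inverse of the
   random choice rule x, A ↦ Σ_y p(x, y, A, X), and complete monotonicity makes q1 and
   the conditionals q(x, ·, A, ·) / q1(x, A) nonnegative.  Falmagne's theorem turns each
   of them into a distribution on orders whose lower sets L(≻, x) have exactly these
   probabilities: ν comes from q1, and t(x, ≻) from the conditional at A = L(≻, x).
   Falmagne's theorem is proved by building the order bottom-up as a Markov chain on
   sets, which from C adds z ∉ C with probability proportional to r(z, C ∪ {z}).
   Möbius inversion of the normalisation gives flow conservation
   Σ_{x ∈ C} r(x, C) = Σ_{z ∉ C} r(z, C ∪ {z}) for ∅ ≠ C ≠ X, so the chain passes
   through C with probability Σ_{x ∈ C} r(x, C), and L(≻, x) = A with probability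
   r(x, A). *)

Lemma mem_neq_set0 (T : finType) x (A : {set T}) : x \in A -> A != set0.
Proof. by move=> xA; apply/set0Pn; exists x. Qed.

Section SupersetMobius.
Variables (T : finType) (R : comPzRingType).
Implicit Types (A B C D : {set T}) (f g : {set T} -> R).

Lemma sum_sign_interval A B :
  \sum_(J : {set T} | (A \subset J) && (J \subset B)) (-1) ^+ #|J :\: A| = (A == B)%:R :> R.
Proof.
pose F i : R := if i \in B then (if i \in A then 1 else -1) else 0.
pose G i : R := (i \notin A)%:R.
have prodFG : \prod_i (F i + G i) = (A == B)%:R.
  have [AB|] := eqVneq A B.
    by rewrite big1 // => i _; rewrite /F /G AB; case: (i \in B); rewrite ?addr0 ?add0r.
  rewrite eqEsubset negb_and => /orP[] /subsetPn[i iX niY];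
    by rewrite (bigD1 i) //= /F /G iX (negbTE niY) /= ?addr0 ?addNr mul0r.
(* Expanding the product, the subset [J] collects the factors [F i]. *)
rewrite -prodFG bigA_distr big_mkcond /=; apply: eq_bigr => J _.
case: ifP => [/andP[AJ JB]|].
  rewrite -prodr_const big_mkcond /=; apply: eq_bigr => i _; rewrite /F /G !inE.
  case iJ: (i \in J); case iA: (i \in A) => //=.
  - by rewrite (subsetP JB).
  - by rewrite (subsetP JB).
  - by rewrite (subsetP AJ) in iJ.
move/negbT; rewrite negb_and => /orP[] /subsetPn[i iX niY].
  by rewrite (bigD1 i) //= (negbTE niY) /G iX mul0r.
by rewrite (bigD1 i) //= iX /F (negbTE niY); case: (i \in A); rewrite mul0r.
Qed.

Lemma sum_sign_interval_top A B :
  \sum_(J : {set T} | (A \subset J) && (J \subset B)) (-1) ^+ #|B :\: J| = (A == B)%:R :> R.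
Proof.
have [AB|nAB] := boolP (A \subset B); last first.
  rewrite big_pred0; last by move=> J; apply: contraNF nAB => /andP[]; apply: subset_trans.
  by case: eqVneq nAB => // ->; rewrite subxx.
transitivity (\sum_(J : {set T} | (A \subset J) && (J \subset B))
                (-1) ^+ #|B :\: A| * (-1) ^+ #|J :\: A| : R).
  apply: eq_bigr => J /andP[AJ JB].
  have -> : #|B :\: A| = (#|B :\: J| + #|J :\: A|)%N.
    rewrite !cardsD (setIidPr AB) (setIidPr JB) (setIidPr AJ).
    by have := subset_leq_card AJ; have := subset_leq_card JB; lia.
  by rewrite exprD -mulrA -expr2 sqrr_sign mulr1.
rewrite -mulr_sumr sum_sign_interval.
by case: eqVneq => [->|_]; rewrite ?mulr0 // setDv cards0 mul1r.
Qed.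

Definition mob f A : R := \sum_(A' : {set T} | A \subset A') (-1) ^+ #|A' :\: A| * f A'.

Lemma eq_mob f g A : (forall A', A \subset A' -> f A' = g A') -> mob f A = mob g A.
Proof. by move=> fg; apply: eq_bigr => A' AA'; rewrite fg. Qed.

Lemma mobB f g A : mob (fun A' => f A' - g A') A = mob f A - mob g A.
Proof. by rewrite /mob -sumrB; apply: eq_bigr => A' _; rewrite mulrBr. Qed.

Lemma mob_sum (I : finType) (P : pred I) (F : I -> {set T} -> R) A :
  mob (fun A' => \sum_(i | P i) F i A') A = \sum_(i | P i) mob (F i) A.
Proof. by rewrite /mob exchange_big; apply: eq_bigr => A' _; rewrite mulr_sumr. Qed.

Lemma exchange_big_sup (F : {set T} -> {set T} -> R) A :
  \sum_(A' : {set T} | A \subset A') \sum_(A'' : {set T} | A' \subset A'') F A' A'' =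
  \sum_(A'' : {set T} | A \subset A'')
    \sum_(A' : {set T} | (A \subset A') && (A' \subset A'')) F A' A''.
Proof.
rewrite (exchange_big_dep (fun A'' => A \subset A'')) => [|A' A'']; last exact: subset_trans.
by apply: eq_bigr => A'' _; apply: eq_bigl => A'; rewrite andbC.
Qed.

Lemma sum_sup_eq_mul g A : \sum_(A' : {set T} | A \subset A') (A == A')%:R * g A' = g A.
Proof.
rewrite (bigD1 A) //= eqxx mul1r big1 ?addr0 // => A' /andP[_ nAA'].
by rewrite eq_sym (negbTE nAA') mul0r.
Qed.

Lemma mob_sum_sup f g A :
  (forall A', A \subset A' -> f A' = \sum_(A'' : {set T} | A' \subset A'') g A'') ->
  mob f A = g A.
Proof.
move=> fE; rewrite (eq_mob (g := fun A' => \sum_(A'' : {set T} | A' \subset A'') g A'')) //.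
rewrite /mob; under eq_bigr do rewrite mulr_sumr.
rewrite exchange_big_sup -[RHS]sum_sup_eq_mul; apply: eq_bigr => A'' _.
by rewrite -sum_sign_interval mulr_suml.
Qed.

Lemma sum_sup_mob f A : \sum_(A' : {set T} | A \subset A') mob f A' = f A.
Proof.
rewrite /mob exchange_big_sup -[RHS]sum_sup_eq_mul; apply: eq_bigr => A'' _.
by rewrite -sum_sign_interval_top mulr_suml.
Qed.

Lemma mob1 C : mob (fun=> 1) C = (C == setT)%:R.
Proof.
rewrite -sum_sign_interval; apply: eq_big => [D|D _]; last exact: mulr1.
by rewrite subsetT andbT.
Qed.

Lemma mob_eq0 C : mob (fun D => (D == set0)%:R) C = (C == set0)%:R.
Proof.
have [->|C0] := eqVneq C set0.
  rewrite /mob (bigD1 set0) ?sub0set //= eqxx setDv cards0 mulr1 big1 ?addr0 // => D.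
  by case/andP=> _ /negbTE ->; rewrite mulr0.
rewrite /mob big1 // => D CD; case: eqVneq CD => [->|_ _]; last exact: mulr0.
by rewrite subset0 (negbTE C0).
Qed.

Lemma mob_mem_mul x f C : x \in C -> mob (fun D => (x \in D)%:R * f D) C = mob f C.
Proof. by move=> xC; apply: eq_mob => D /subsetP CD; rewrite CD // mul1r. Qed.

Lemma mob_notin_mul x f C :
  x \notin C -> mob (fun D => (x \in D)%:R * f D) C = - mob f (x |: C).
Proof.
move=> xC; rewrite /mob -sumrN !(big_mkcond (fun D => _ \subset D)) /=.
apply: eq_bigr => D _; rewrite subUset sub1set.
case xD: (x \in D); case CD: (C \subset D); rewrite /= ?mul0r ?mulr0 ?oppr0 // mul1r.
rewrite (cardsD1 x (D :\: C)) !inE xD xC /= setDDl setUC exprS.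
by rewrite mulN1r mulNr.
Qed.

Lemma mob_sum_mem_sup (r : T -> {set T} -> R) C :
  mob (fun D => \sum_(x in D) \sum_(A : {set T} | D \subset A) r x A) C =
  \sum_(x in C) r x C - \sum_(z in ~: C) r z (z |: C).
Proof.
pose F x D := \sum_(A : {set T} | D \subset A) r x A.
have mobF x D : mob (F x) D = r x D by apply: mob_sum_sup.
transitivity (\sum_x mob (fun D => (x \in D)%:R * F x D) C).
  rewrite -mob_sum; apply: eq_mob => D _; rewrite big_mkcond /=.
  by apply: eq_bigr => x _; case: (x \in D); rewrite ?mul1r ?mul0r.
rewrite (bigID (mem C)) /= -sumrN; congr (_ + _).
  by apply: eq_bigr => x xC; rewrite mob_mem_mul // mobF.
apply: eq_big => [x|x /negbTE xC]; first by rewrite inE.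
by rewrite mob_notin_mul ?xC // mobF.
Qed.

End SupersetMobius.

Section SumSeq.
Variables (T : finType) (R : pzRingType).
Implicit Types (l : seq T) (F : seq T -> R).

Fixpoint sumseq k F : R :=
  if k is k'.+1 then \sum_z sumseq k' (fun l => F (z :: l)) else F [::].

Lemma eq_sumseq k F G : (forall l, size l = k -> F l = G l) -> sumseq k F = sumseq k G.
Proof.
elim: k F G => [|k IH] F G FG /=; first exact: FG.
by apply: eq_bigr => z _; apply: IH => l sz; rewrite FG //= sz.
Qed.

Lemma sumseq_cat k1 k2 F :
  sumseq (k1 + k2) F = sumseq k1 (fun l1 => sumseq k2 (fun l2 => F (l1 ++ l2))).
Proof. by elim: k1 F => [|k1 IH] F //=; apply: eq_bigr => z _; apply: IH. Qed.

Lemma sumseq_sum k (I : finType) (P : pred I) (F : I -> seq T -> R) :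
  sumseq k (fun l => \sum_(i | P i) F i l) = \sum_(i | P i) sumseq k (F i).
Proof.
elim: k F => [|k IH] F //=; under eq_bigr do rewrite IH.
exact: exchange_big.
Qed.

Lemma sumseq0 k : sumseq k (fun=> 0) = 0.
Proof. by elim: k => //= k IH; rewrite big1. Qed.

Lemma sumseq_mulr k c F : sumseq k (fun l => c * F l) = c * sumseq k F.
Proof. by elim: k F => [|k IH] F //=; rewrite mulr_sumr; apply: eq_bigr. Qed.

Lemma sumseq_mull k c F : sumseq k (fun l => F l * c) = sumseq k F * c.
Proof. by elim: k F => [|k IH] F //=; rewrite mulr_suml; apply: eq_bigr. Qed.

Fixpoint allseq k : seq (seq T) :=
  if k is k'.+1 then [seq z :: l | z <- enum T, l <- allseq k'] else [:: [::]].

Lemma mem_allseq k l : (l \in allseq k) = (size l == k).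
Proof.
elim: k l => [|k IH] [|z l] //=; first by apply/allpairsP => -[[a b] []].
apply/allpairsP/idP => [[[a b] [/= _ bl [_ ->]]]|sz]; first by rewrite eqSS -IH.
by exists (z, l); rewrite /= mem_enum IH -eqSS.
Qed.

Lemma allseq_uniq k : uniq (allseq k).
Proof.
elim: k => [//|k IH] /=; apply: allpairs_uniq => //; first exact: enum_uniq.
by move=> [a b] [c d] _ _ /= [-> ->].
Qed.

Lemma sum_allseq k F : \sum_(l <- allseq k) F l = sumseq k F.
Proof.
elim: k F => [|k IH] F /=; first by rewrite big_seq1.
by rewrite big_allpairs_dep big_enum /=; apply: eq_bigr => z _; apply: IH.
Qed.

End SumSeq.

Section FullSeq.
Variable T : finType.
Implicit Types (l : seq T) (A : {set T}).

Lemma mem_full_uniq l : uniq l -> size l = #|T| -> forall x, x \in l.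
Proof.
move=> ul sz x; have [|_ ->] := uniq_min_size ul (fun y _ => mem_enum T y); last exact: mem_enum.
by rewrite -cardE sz.
Qed.

Definition upto x l : {set T} := [set y in take (index x l).+1 l].

Lemma upto_cat x l1 l2 : x \notin l1 -> upto x (l1 ++ x :: l2) = x |: [set y in l1].
Proof.
move=> xl1; rewrite /upto index_cat (negbTE xl1) /= eqxx addn0 take_cat ltnNge leqnSn /=.
by rewrite subSnn take_cons take0; apply/setP => y; rewrite !inE mem_cat inE orbC.
Qed.

Lemma upto_cat_eq x z l1 l2 A : x \in A -> uniq (l1 ++ z :: l2) ->
  size (l1 ++ z :: l2) = #|T| -> size l1 = #|A :\ x| ->
  (upto x (l1 ++ z :: l2) == A) = (z == x) && ([set y in l1] == A :\ x).
Proof.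
move=> xA ul sz sz1; set l := l1 ++ z :: l2.
have xl1 : z = x -> x \notin l1.
  by move=> <-; move: ul; rewrite cat_uniq /= negb_or => /and4P[_ /andP[zl1 _] _ _].
apply/eqP/andP => [uptoA|[/eqP zx /eqP l1A]]; last by rewrite /l zx upto_cat ?xl1 // l1A setD1K.
have xl : x \in l := mem_full_uniq ul sz x.
have index_x : index x l = size l1.
  move/(congr1 (fun S : {set T} => #|S|)): uptoA; rewrite cardsE.
  rewrite (card_uniqP (take_uniq _ ul)) size_takel ?index_mem //.
  by rewrite (cardsD1 x A) xA sz1 add1n => -[].
have zx : z = x by have := nth_index x xl; rewrite index_x nth_cat ltnn subnn.
split; first by rewrite zx.
by move: uptoA; rewrite /l zx upto_cat ?xl1 // => <-; rewrite setU1K ?inE ?xl1.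
Qed.

End FullSeq.

Section FalmagneChain.
Variables (T : finType) (R : realFieldType) (r : T -> {set T} -> R).
Hypothesis r_ge0 : forall x (A : {set T}), x \in A -> 0 <= r x A.
Hypothesis r_sum1 : forall A : {set T}, A != set0 ->
  \sum_(x in A) \sum_(A' : {set T} | A \subset A') r x A' = 1.
Implicit Types (A C D : {set T}) (l : seq T).

Definition inflow C : R := \sum_(x in C) r x C.
Definition outflow C : R := \sum_(z in ~: C) r z (z |: C).

Lemma le_inflow x C : x \in C -> r x C <= inflow C.
Proof.
move=> xC; rewrite /inflow (bigD1 x) //= lerDl.
by apply: sumr_ge0 => y /andP[yC _]; apply: r_ge0.
Qed.

Lemma le_outflow z C : z \notin C -> r z (z |: C) <= outflow C.
Proof.
move=> zC; rewrite /outflow (bigD1 z) ?inE //= lerDl.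
by apply: sumr_ge0 => y _; apply: r_ge0; rewrite setU11.
Qed.

Lemma outflow_ge0 C : 0 <= outflow C.
Proof. by apply: sumr_ge0 => z _; apply: r_ge0; rewrite setU11. Qed.

Lemma inflow_sub_outflow C : inflow C - outflow C = (C == setT)%:R - (C == set0)%:R.
Proof.
rewrite -mob_sum_mem_sup -mob1 -mob_eq0 -mobB; apply: eq_mob => D _.
have [->|D0] := eqVneq D set0; first by rewrite big_set0 subrr.
by rewrite r_sum1 // subr0.
Qed.

Lemma outflowE C : C != setT -> outflow C = (C == set0)%:R + inflow C.
Proof. by move=> CT; have := inflow_sub_outflow C; rewrite (negbTE CT) mulr0n; lra. Qed.

Lemma outflow_gt0 x C : C != setT -> x \in C -> 0 < r x C -> 0 < outflow C.
Proof.
move=> CT xC rx_gt0; rewrite outflowE //.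
by rewrite (negbTE (mem_neq_set0 xC)) add0r (lt_le_trans rx_gt0) ?le_inflow.
Qed.

(* The probability that the chain started at [C] next adds the elements of [l], in order. *)
Fixpoint path_weight C l : R :=
  if l is z :: l' then
    (z \notin C)%:R * (r z (z |: C) / outflow C) * path_weight (z |: C) l'
  else 1.

Lemma path_weight_cat C l1 l2 :
  path_weight C (l1 ++ l2) = path_weight C l1 * path_weight (C :|: [set y in l1]) l2.
Proof.
elim: l1 C => [|z l1 IH] C /=.
  by rewrite mul1r; congr path_weight; apply/setP => y; rewrite !inE orbF.
rewrite IH !mulrA; congr (_ * path_weight _ _); apply/setP => y; rewrite !inE.
by case: (y == z); case: (y \in C).
Qed.

Lemma path_weight_ge0 C l : 0 <= path_weight C l.
Proof.
elim: l C => [|z l IH] C //=; rewrite !mulr_ge0 ?ler0n ?invr_ge0 ?outflow_ge0 //.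
by rewrite r_ge0 ?setU11.
Qed.

Lemma path_weight_neq0 C l :
  path_weight C l != 0 -> uniq l && all (fun z => z \notin C) l.
Proof.
elim: l C => [|z l IH] C //= w_neq0.
have zC : z \notin C by apply: contraNN w_neq0 => zC; rewrite zC !mul0r.
have /IH /andP[ul /allP lC] : path_weight (z |: C) l != 0.
  by apply: contraNN w_neq0 => /eqP ->; rewrite mulr0.
rewrite ul zC andbT /=; apply/andP; split.
  by apply/negP => /lC; rewrite !inE eqxx.
by apply/allP => y /lC; rewrite !inE negb_or => /andP[].
Qed.

Lemma path_weight_total k C : #|~: C| = k -> (C != setT -> 0 < outflow C) ->
  sumseq k (path_weight C) = 1.
Proof.
elim: k C => [|k IH] C cardC outC_gt0 //=.
have CT : C != setT by apply: contra_eq_neq cardC => ->; rewrite setCT cards0.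
have outC := outC_gt0 CT.
transitivity (\sum_z (z \notin C)%:R * (r z (z |: C) / outflow C)).
  apply: eq_bigr => z _; rewrite sumseq_mulr.
  have [zC|zC] := boolP (z \in C); first by rewrite !mul0r.
  have [->|rz] := eqVneq (r z (z |: C)) 0; first by rewrite mul0r !mulr0 mul0r.
  rewrite IH ?mulr1 // => [|zCT].
    by move: cardC; rewrite (cardsD1 z) inE zC setCU setIC -setDE => -[].
  by apply: (outflow_gt0 zCT (setU11 z C)); rewrite lt_neqAle eq_sym rz r_ge0 ?setU11.
rewrite -[RHS](divff (lt0r_neq0 outC)) /outflow mulr_suml [RHS]big_mkcond /=.
by apply: eq_bigr => z _; rewrite inE; case: (z \in C); rewrite ?mul0r ?mul1r.
Qed.

Lemma outflow_setD1 z D : outflow (D :\ z) = (D :\ z == set0)%:R + inflow (D :\ z).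
Proof. by rewrite outflowE //; apply/eqP => DzT; have := setD11 z D; rewrite DzT inE. Qed.

Lemma r_div_outflowK z D : z \in D -> r z D / outflow (D :\ z) * outflow (D :\ z) = r z D.
Proof.
move=> zD; have [out0|out_neq0] := eqVneq (outflow (D :\ z)) 0; last by rewrite divfK.
have : r z D <= 0 by rewrite -out0 -{1}(setD1K zD) le_outflow ?setD11.
by rewrite out0 mulr0 => rz_le0; apply/esym/eqP; rewrite eq_le rz_le0 r_ge0.
Qed.

Lemma path_weight_step (S : {set T}) D z (c : R) :
  (z \notin S)%:R * (r z (z |: S) / outflow S) * c * (z |: S == D)%:R =
  (if z \in D then r z D / outflow (D :\ z) * (c * (S == D :\ z)%:R) else 0).
Proof.
have [zS|zS] := boolP (z \in S).
  rewrite /= !mul0r; case: ifP => // zD.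
  have [SD|_] := eqVneq S (D :\ z); last by rewrite mulr0n !mulr0.
  by rewrite SD !inE eqxx in zS.
rewrite /= mul1r; have [<-|neq] := eqVneq (z |: S) D.
  by rewrite setU11 setU1K // eqxx !mulr1.
rewrite mulr0; case: ifP => // zD.
have [SD|_] := eqVneq S (D :\ z); last by rewrite mulr0n !mulr0.
by rewrite SD setD1K ?eqxx in neq.
Qed.

Lemma path_weight_reach k D : #|D| = k ->
  sumseq k (fun l => path_weight set0 l * ([set y in l] == D)%:R) = (D == set0)%:R + inflow D.
Proof.
elim: k D => [|k IH] D cardD.
  move/eqP: cardD; rewrite cards_eq0 => /eqP -> /=.
  have -> : [set y in [::]] = set0 :> {set T} by apply/setP => y; rewrite !inE.
  by rewrite /inflow big_set0 mul1r addr0.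
have D0 : D != set0 by apply: contra_eq_neq cardD => ->; rewrite cards0.
rewrite -addn1 sumseq_cat (negbTE D0) add0r.
transitivity (sumseq k (fun l1 => \sum_(z in D) r z D / outflow (D :\ z) *
                 (path_weight set0 l1 * ([set y in l1] == D :\ z)%:R))).
  apply: eq_sumseq => l1 _ /=; rewrite [RHS]big_mkcond; apply: eq_bigr => z _.
  have -> : [set y in l1 ++ [:: z]] = z |: [set y in l1].
    by apply/setP => y; rewrite !inE mem_cat inE orbC.
  by rewrite -path_weight_step path_weight_cat set0U /=; ring.
rewrite sumseq_sum /inflow; apply: eq_bigr => z zD.
rewrite sumseq_mulr IH; last by move: cardD; rewrite (cardsD1 z) zD add1n => -[].
by rewrite -outflow_setD1 r_div_outflowK.
Qed.

Lemma path_weight_upto_cat x A l1 z l2 : x \in A -> size l1 = #|A :\ x| ->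
  size (l1 ++ z :: l2) = #|T| ->
  path_weight set0 (l1 ++ z :: l2) * (upto x (l1 ++ z :: l2) == A)%:R =
  path_weight set0 (l1 ++ z :: l2) * ((z == x) && ([set y in l1] == A :\ x))%:R.
Proof.
move=> xA sz1 sz; have [->|w_neq0] := eqVneq (path_weight set0 (l1 ++ z :: l2)) 0.
  by rewrite !mul0r.
have /andP[ul _] := path_weight_neq0 w_neq0.
by rewrite upto_cat_eq.
Qed.

Lemma path_weight_upto x A : x \in A ->
  sumseq #|T| (fun l => path_weight set0 l * (upto x l == A)%:R) = r x A.
Proof.
move=> xA; pose c := r x A / outflow (A :\ x).
have cardT : #|T| = (#|A :\ x| + (1 + #|~: A|))%N.
  by have := cardsC A; have := cardsD1 x A; rewrite xA; lia.
transitivity (c * sumseq #|A :\ x|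
                      (fun l1 => path_weight set0 l1 * ([set y in l1] == A :\ x)%:R) *
                  sumseq #|~: A| (path_weight A)).
  rewrite [in sumseq _]cardT sumseq_cat -(sumseq_mulr _ c) -sumseq_mull.
  apply: eq_sumseq => l1 sz1; rewrite add1n /=.
  have szT z l2 : size l2 = #|~: A| -> size (l1 ++ z :: l2) = #|T|.
    by move=> sz2; rewrite size_cat /= sz1 sz2 cardT.
  rewrite (bigD1 x) //= big1 ?addr0 => [|z zx].
    rewrite -sumseq_mulr; apply: eq_sumseq => l2 /(szT x) sz.
    rewrite path_weight_upto_cat // eqxx /=.
    have [l1A|] := eqVneq [set y in l1] (A :\ x); last by rewrite mulr0n !mulr0 mul0r.
    rewrite path_weight_cat set0U /= l1A setD11 setD1K //= /c; ring.
  rewrite (eq_sumseq (G := fun=> 0)) ?sumseq0 // => l2 /(szT z) sz.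
  by rewrite path_weight_upto_cat // (negbTE zx) mulr0n mulr0.
rewrite path_weight_reach // -outflow_setD1 /c r_div_outflowK //.
have [->|rx_neq0] := eqVneq (r x A) 0; first by rewrite mul0r.
rewrite path_weight_total ?mulr1 // => AT.
by apply: (outflow_gt0 AT xA); rewrite lt_neqAle eq_sym rx_neq0 r_ge0.
Qed.

End FalmagneChain.

Section LinearOrders.
Variable T : finType.
Implicit Types (l : seq T) (s : linord T) (A B : {set T}).

Lemma lgt_irr s x : lgt s x x = false.
Proof. by case/and3P: (valP s) => /forallP irr _ _; apply/negbTE/irr. Qed.

Lemma lgt_trans s x y z : lgt s x y -> lgt s y z -> lgt s x z.
Proof.
case/and3P: (valP s) => _ /forallP /(_ x) /forallP /(_ y) /forallP /(_ z) /implyP trans _.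
by move=> xy yz; apply: trans; rewrite /lgt in xy yz; rewrite xy yz.
Qed.

Lemma lgt_total s x y : x != y -> lgt s x y || lgt s y x.
Proof. by case/and3P: (valP s) => _ _ /forallP /(_ x) /forallP /(_ y) /implyP. Qed.

Definition seq_graph l : {ffun T * T -> bool} := [ffun xy => index xy.2 l < index xy.1 l]%N.

Lemma seq_graph_linord l : (forall x, x \in l) -> is_linord (seq_graph l).
Proof.
move=> full; apply/and3P; split.
- by apply/forallP => x; rewrite ffunE ltnn.
- apply/forallP => x; apply/forallP => y; apply/forallP => z; rewrite !ffunE /=.
  by apply/implyP => /andP[xy yz]; apply: ltn_trans yz xy.
- apply/forallP => x; apply/forallP => y; apply/implyP => xy; rewrite !ffunE /=.
  by rewrite orbC -neq_ltn; apply: contra xy => /eqP/(index_inj x (full x) (full y))/eqP.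
Qed.

Definition enum_linord : linord T := Sub (seq_graph (enum T)) (seq_graph_linord (mem_enum T)).

(* Later elements of [l] are better; the default is only used when [l] misses an element. *)
Definition linord_of_seq l : linord T := insubd enum_linord (seq_graph l).

Lemma lgt_linord_of_seq l x y : (forall z, z \in l) ->
  lgt (linord_of_seq l) x y = (index y l < index x l)%N.
Proof. by move=> full; rewrite /lgt insubdK ?ffunE //; apply: seq_graph_linord. Qed.

Definition leo s : rel T := fun x y => (x == y) || lgt s y x.

Lemma leo_trans s : transitive (leo s).
Proof.
move=> y x z /orP[/eqP -> //|yx] /orP[/eqP <-|zy]; first by rewrite /leo yx orbT.
by rewrite /leo (lgt_trans zy yx) orbT.
Qed.

Lemma leo_anti s : antisymmetric (leo s).
Proof.
move=> x y /andP[/orP[/eqP //|yx] /orP[/eqP //|xy]].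
by have := lgt_trans yx xy; rewrite lgt_irr.
Qed.

Lemma leo_total s : total (leo s).
Proof.
move=> x y; rewrite /leo; case: (eqVneq x y) => [->|xy] //=.
by rewrite orbC lgt_total.
Qed.

Definition seq_of_linord s := sort (leo s) (enum T).

Lemma seq_of_linord_uniq s : uniq (seq_of_linord s).
Proof. by rewrite sort_uniq enum_uniq. Qed.

Lemma size_seq_of_linord s : size (seq_of_linord s) = #|T|.
Proof. by rewrite size_sort cardE. Qed.

Lemma mem_seq_of_linord s x : x \in seq_of_linord s.
Proof. by rewrite mem_sort mem_enum. Qed.

Lemma seq_of_linordK : cancel seq_of_linord linord_of_seq.
Proof.
move=> s; apply: val_inj; rewrite /linord_of_seq insubdK; last first.
  by apply: seq_graph_linord; apply: mem_seq_of_linord.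
apply/ffunP => -[x y]; rewrite ffunE /=; set l := seq_of_linord s.
have sorted_l : sorted (leo s) l := sort_sorted (@leo_total s) _.
have [xl yl] := (mem_seq_of_linord s x, mem_seq_of_linord s y).
rewrite -[X in _ = X]/(lgt s x y).
apply/idP/idP => [yx|xy].
  have /orP[/eqP eq_yx|//] := sorted_ltn_index (@leo_trans s) sorted_l y x yl xl yx.
  by rewrite eq_yx ltnn in yx.
have [//|xy_lt|eq_idx] := ltngtP (index y l) (index x l).
  have /orP[/eqP eq_xy|yx] := sorted_ltn_index (@leo_trans s) sorted_l x y xl yl xy_lt.
    by rewrite eq_xy lgt_irr in xy.
  by have := lgt_trans xy yx; rewrite lgt_irr.
by rewrite (index_inj x yl xl eq_idx) lgt_irr in xy.
Qed.

Lemma linord_of_seqK l : uniq l -> size l = #|T| -> seq_of_linord (linord_of_seq l) = l.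
Proof.
move=> ul sz; have full := mem_full_uniq ul sz.
apply: (sorted_eq (@leo_trans _) (@leo_anti _)); first exact: sort_sorted (@leo_total _) _.
  case: l ul sz full => [//|x0 l'] ul sz full.
  apply: pairwise_sorted; apply/(pairwiseP x0) => i j; rewrite !inE => ilt jlt ij.
  by rewrite /leo lgt_linord_of_seq // !index_uniq // ij orbT.
rewrite perm_sort; apply: uniq_perm => //; first exact: enum_uniq.
by move=> y; rewrite mem_enum full.
Qed.

Lemma sum_linord (R : nmodType) (G : linord T -> R) :
  \sum_s G s = \sum_(l <- allseq T #|T| | uniq l) G (linord_of_seq l).
Proof.
have /= big_linord_map := big_map linord_of_seq xpredT G.
rewrite -[RHS]big_filter -big_linord_map [RHS]big_uniq /=.
  apply: eq_bigl => s; apply/esym/mapP; exists (seq_of_linord s); last by rewrite seq_of_linordK.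
  by rewrite mem_filter seq_of_linord_uniq mem_allseq size_seq_of_linord eqxx.
rewrite map_inj_in_uniq ?filter_uniq ?allseq_uniq //.
move=> l1 l2; rewrite !mem_filter !mem_allseq => /andP[ul1 /eqP sz1] /andP[ul2 /eqP sz2] eq12.
by rewrite -(linord_of_seqK ul1 sz1) -(linord_of_seqK ul2 sz2) eq12.
Qed.

Definition lower_set s x : {set T} := x |: [set y | lgt s x y].

Lemma lower_set_of_seq l x : uniq l -> size l = #|T| -> lower_set (linord_of_seq l) x = upto x l.
Proof.
move=> ul sz; have full := mem_full_uniq ul sz.
apply/setP => y; rewrite !inE lgt_linord_of_seq // in_take // ltnS [RHS]leq_eqVlt.
have [->|yx] := eqVneq y x; first by rewrite !eqxx.
suff -> : (index y l == index x l) = false by [].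
by apply: contraNF yx => /eqP/(index_inj x (full y) (full x))/eqP.
Qed.

Lemma NsetE s x A : Nset x A s = (A \subset lower_set s x).
Proof.
apply/forallP/subsetP => [Ns y yA|sub y]; first have := Ns y.
  by rewrite yA !inE; case: eqVneq.
by apply/implyP => yA; apply/implyP => yx; have := sub y yA; rewrite !inE (negbTE yx).
Qed.

Lemma sum_Nset (R : nmodType) (F : linord T -> R) x A :
  \sum_(s | Nset x A s) F s =
  \sum_(A' : {set T} | A \subset A') \sum_(s | lower_set s x == A') F s.
Proof.
rewrite (exchange_big_dep xpredT) //= [LHS]big_mkcond /=; apply: eq_bigr => s _.
rewrite NsetE; have [sub|nsub] := boolP (A \subset lower_set s x).
  rewrite (big_pred1 (lower_set s x)) // => A' /=.
  by rewrite [_ == A']eq_sym; case: eqP => [->|]; rewrite ?sub ?andbF.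
by rewrite big_pred0 // => A'; case: eqP => [<-|]; rewrite ?(negbTE nsub) ?andbF.
Qed.

Lemma sum_Nset_best (R : nzSemiRingType) s B :
  B != set0 -> \sum_(y in B) (Nset y B s)%:R = 1 :> R.
Proof.
case/set0Pn => y0 y0B; set l := seq_of_linord s.
have lgtE a b : lgt s a b = (index b l < index a l)%N.
  by rewrite -{1}(seq_of_linordK s) lgt_linord_of_seq // => z; apply: mem_seq_of_linord.
have [m mB m_max] : exists2 m, m \in B & forall y, y \in B -> (index y l <= index m l)%N.
  by case: (arg_maxnP (fun z => index z l) y0B) => m; exists m.
have NsetB y : y \in B -> Nset y B s = (y == m).
  move=> yB; apply/forallP/eqP => [Ns|->].
    apply/eqP; apply: contraT => ym; have := Ns m; rewrite mB eq_sym ym /= lgtE.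
    by rewrite ltnNge (m_max y yB).
  move=> z; apply/implyP => zB; apply/implyP => zm.
  rewrite lgtE ltn_neqAle (m_max z zB) andbT.
  by apply: contra zm => /eqP/(index_inj z (mem_seq_of_linord s z) (mem_seq_of_linord s m))/eqP.
rewrite (eq_bigr (fun y => (y == m)%:R)) => [|y yB]; last by rewrite NsetB.
by rewrite (bigD1 m) //= eqxx big1 ?addr0 // => y /andP[_ /negbTE ->].
Qed.

End LinearOrders.

Section FalmagneDistribution.
Variables (T : finType) (R : realFieldType) (r : T -> {set T} -> R).
Hypothesis r_ge0 : forall x (A : {set T}), x \in A -> 0 <= r x A.
Hypothesis r_sum1 : forall A : {set T}, A != set0 ->
  \sum_(x in A) \sum_(A' : {set T} | A \subset A') r x A' = 1.
Implicit Types (s : linord T) (A : {set T}).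

Definition falmagne s : R := path_weight r set0 (seq_of_linord s).

Lemma falmagne_ge0 s : 0 <= falmagne s.
Proof. exact: path_weight_ge0. Qed.

Lemma sum_falmagne_mul (G : linord T -> R) :
  \sum_s falmagne s * G s = sumseq #|T| (fun l => path_weight r set0 l * G (linord_of_seq l)).
Proof.
rewrite sum_linord big_seq_cond -sum_allseq big_mkcond /=; apply: eq_big_seq => l.
rewrite mem_allseq => /eqP sz; rewrite sz eqxx /=; have [ul|nul] := boolP (uniq l).
  by rewrite /falmagne linord_of_seqK.
have [->|w_neq0] := eqVneq (path_weight r set0 l) 0; first by rewrite mul0r.
by have /andP[ul _] := path_weight_neq0 w_neq0; rewrite ul in nul.
Qed.

Lemma sum_falmagne : \sum_s falmagne s = 1.
Proof.
rewrite -[LHS](eq_bigr _ (fun s _ => mulr1 (falmagne s))) sum_falmagne_mul.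
rewrite (eq_sumseq (G := path_weight r set0)) => [|l _]; last exact: mulr1.
apply: path_weight_total => //; first by rewrite setC0 cardsT.
by move=> T0; rewrite outflowE // eqxx /inflow big_set0 addr0 ltr01.
Qed.

Lemma falmagne_lower_set x A : x \in A -> \sum_(s | lower_set s x == A) falmagne s = r x A.
Proof.
move=> xA; rewrite -(path_weight_upto r_ge0 r_sum1 xA) big_mkcond /=.
rewrite (eq_bigr (fun s => falmagne s * (lower_set s x == A)%:R)) => [|s _]; last first.
  by case: ifP; rewrite ?mulr1 ?mulr0.
rewrite sum_falmagne_mul; apply: eq_sumseq => l sz.
have [->|w_neq0] := eqVneq (path_weight r set0 l) 0; first by rewrite !mul0r.
by have /andP[ul _] := path_weight_neq0 w_neq0; rewrite lower_set_of_seq.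
Qed.

End FalmagneDistribution.

Lemma mobiusE (R : realType) (X : finType) (p : X -> X -> {set X} -> {set X} -> R) x y A B :
  mobius p x y A B = mob (fun A' => mob (fun B' => p x y A' B') B) A.
Proof.
rewrite /mobius /mob; apply: eq_bigr => A' _; rewrite mulr_sumr; apply: eq_bigr => B' _.
by rewrite exprD mulrA.
Qed.

Section Necessity.
Variables (R : realType) (X : finType) (p : X -> X -> {set X} -> {set X} -> R).
Variables (nu : linord X -> R) (t : X -> linord X -> linord X -> R).
Hypothesis p_cdru : forall A B : {set X}, A != set0 -> B != set0 ->
  forall x y, x \in A -> y \in B ->
    p x y A B = \sum_(s | Nset x A s) \sum_(s' | Nset y B s') nu s * t x s s'.

Lemma mobius_cdru x y (A B : {set X}) : x \in A -> y \in B ->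
  mobius p x y A B =
  \sum_(s | lower_set s x == A) \sum_(s' | lower_set s' y == B) nu s * t x s s'.
Proof.
move=> xA yB; pose g A' B' :=
  \sum_(s | lower_set s x == A') \sum_(s' | lower_set s' y == B') nu s * t x s s'.
have p_sup (A' B' : {set X}) : A \subset A' -> B \subset B' ->
    p x y A' B' =
    \sum_(A'' : {set X} | A' \subset A'') \sum_(B'' : {set X} | B' \subset B'') g A'' B''.
  move=> /subsetP AA' /subsetP BB'; have [xA' yB'] := (AA' x xA, BB' y yB).
  rewrite p_cdru ?(mem_neq_set0 xA') ?(mem_neq_set0 yB') // sum_Nset; apply: eq_bigr => A'' _.
  by rewrite (eq_bigr _ (fun s _ => sum_Nset (fun s' => nu s * t x s s') y B')) exchange_big.
rewrite mobiusE; apply: (mob_sum_sup (g := g^~ B)) => A' AA'.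
rewrite (eq_mob (g := fun B' => \sum_(A'' : {set X} | A' \subset A'')
                                \sum_(B'' : {set X} | B' \subset B'') g A'' B'')) => [|B'].
  by rewrite mob_sum; apply: eq_bigr => A'' _; apply: mob_sum_sup.
exact: p_sup.
Qed.

Lemma cdru_complete_monotonicity :
  (forall s, 0 <= nu s) -> (forall x s s', 0 <= t x s s') -> complete_monotonicity p.
Proof.
move=> nu_ge0 t_ge0 A B _ _ x y xA yB; rewrite mobius_cdru //.
by do 2![apply: sumr_ge0 => ? _]; apply: mulr_ge0.
Qed.

Lemma cdru_marginality : (forall x s, \sum_s' t x s s' = 1) -> marginality p.
Proof.
move=> t_sum1 A B C A0 B0 C0 x xA.
suff marg B' : B' != set0 -> \sum_(y in B') p x y A B' = \sum_(s | Nset x A s) nu s.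
  by rewrite !marg.
move=> B'0; rewrite (eq_bigr _ (fun y yB' => p_cdru A0 B'0 xA yB')) exchange_big /=.
apply: eq_bigr => s _; rewrite -[RHS]mulr1 -(t_sum1 x s) mulr_sumr.
transitivity (\sum_s' \sum_(y in B') (Nset y B' s')%:R * (nu s * t x s s')).
  rewrite exchange_big; apply: eq_bigr => y _; rewrite big_mkcond /=.
  by apply: eq_bigr => s' _; case: (Nset y B' s'); rewrite ?mul1r ?mul0r.
by apply: eq_bigr => s' _; rewrite -mulr_suml sum_Nset_best // mul1r.
Qed.

End Necessity.

Section Sufficiency.
Variables (R : realType) (X : finType) (p : X -> X -> {set X} -> {set X} -> R).
Hypotheses (p_rjcr : is_rjcr p) (p_cm : complete_monotonicity p) (p_marg : marginality p).
Implicit Types (A B : {set X}) (s : linord X).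

Definition pmarg x A : R := \sum_(y in [set: X]) p x y A setT.
Definition qmarg x A : R := mob (pmarg x) A.
Definition qcond x A y B : R := mobius p x y A B / qmarg x A.

Lemma setT_neq0 (x : X) : [set: X] != set0.
Proof. by apply: (mem_neq_set0 (x := x)); rewrite inE. Qed.

Lemma mobius_ge0 x y A B : x \in A -> y \in B -> 0 <= mobius p x y A B.
Proof. by move=> xA yB; apply: p_cm => //; [apply: mem_neq_set0 xA | apply: mem_neq_set0 yB]. Qed.

Lemma sum_sup_mobius x y A B :
  \sum_(B' : {set X} | B \subset B') mobius p x y A B' = mob (fun A' => p x y A' B) A.
Proof.
under eq_bigr do rewrite mobiusE.
by rewrite -mob_sum; apply: eq_mob => A' _; rewrite sum_sup_mob.
Qed.

Lemma sum_mobius_marg x A B : x \in A -> B != set0 ->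
  \sum_(y in B) \sum_(B' : {set X} | B \subset B') mobius p x y A B' = qmarg x A.
Proof.
move=> xA B0; under eq_bigr do rewrite sum_sup_mobius.
rewrite -mob_sum; apply: eq_mob => A' /subsetP AA'.
exact: p_marg (mem_neq_set0 (AA' x xA)) B0 (setT_neq0 x) _ (AA' x xA).
Qed.

Lemma qmarg_ge0 x A : x \in A -> 0 <= qmarg x A.
Proof.
move=> xA; rewrite -(sum_mobius_marg xA (setT_neq0 x)).
apply: sumr_ge0 => y _; apply: sumr_ge0 => B'; rewrite subTset => /eqP ->.
by apply: mobius_ge0; rewrite ?inE.
Qed.

Lemma qmarg_sum1 A : A != set0 ->
  \sum_(x in A) \sum_(A' : {set X} | A \subset A') qmarg x A' = 1.
Proof.
move=> A0; under eq_bigr do rewrite sum_sup_mob.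
by case/set0Pn: (A0) => x _; case: (p_rjcr A0 (setT_neq0 x)).
Qed.

Lemma qcond_ge0 x A : x \in A -> forall y B, y \in B -> 0 <= qcond x A y B.
Proof. by move=> xA y B yB; rewrite divr_ge0 ?mobius_ge0 ?qmarg_ge0. Qed.

Lemma qcond_sum1 x A : x \in A -> 0 < qmarg x A -> forall B, B != set0 ->
  \sum_(y in B) \sum_(B' : {set X} | B \subset B') qcond x A y B' = 1.
Proof.
move=> xA q_gt0 B B0; under eq_bigr do rewrite -mulr_suml.
by rewrite -mulr_suml sum_mobius_marg // divff // lt0r_neq0.
Qed.

(* A lower set [A] with [qmarg x A = 0] has probability zero, so any distribution will do. *)
Definition trans_lower x A : linord X -> R :=
  if 0 < qmarg x A then falmagne (qcond x A) else falmagne qmarg.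

Lemma trans_lower_ge0 x A s : x \in A -> 0 <= trans_lower x A s.
Proof.
by move=> xA; rewrite /trans_lower; case: ifP => _; apply: falmagne_ge0;
  [apply: qcond_ge0 | apply: qmarg_ge0].
Qed.

Lemma sum_trans_lower x A : x \in A -> \sum_s trans_lower x A s = 1.
Proof.
move=> xA; rewrite /trans_lower; case: ifP => q_gt0; apply: sum_falmagne.
- exact: qcond_ge0.
- exact: qcond_sum1.
- exact: qmarg_ge0.
- exact: qmarg_sum1.
Qed.

Lemma qmarg_sum_trans_lower x y A B : x \in A -> y \in B ->
  qmarg x A * \sum_(s | Nset y B s) trans_lower x A s =
  \sum_(B' : {set X} | B \subset B') mobius p x y A B'.
Proof.
move=> xA yB; rewrite /trans_lower; case: ifP => q_gt0.
  rewrite sum_Nset mulr_sumr; apply: eq_bigr => B' /subsetP BB'.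
  rewrite falmagne_lower_set ?BB' //; last exact: qcond_sum1.
    by rewrite /qcond mulrC divfK // lt0r_neq0.
  exact: qcond_ge0.
have q0 : qmarg x A = 0 by apply/eqP; rewrite eq_le qmarg_ge0 // andbT leNgt q_gt0.
have /eqP := sum_mobius_marg xA (mem_neq_set0 yB).
rewrite q0 mul0r psumr_eq0 => [/allP all0|y' y'B].
  by have /implyP/(_ yB)/eqP-> := all0 y (mem_index_enum y).
by apply: sumr_ge0 => B' /subsetP BB'; apply: mobius_ge0; rewrite ?BB'.
Qed.

Lemma complete_monotone_marginal_cdru : cdru_consistent p.
Proof.
exists (falmagne qmarg), (fun x s => trans_lower x (lower_set s x)).
split; first by move=> s; apply: falmagne_ge0 qmarg_ge0 _.
split; first by apply: sum_falmagne qmarg_ge0 qmarg_sum1.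
split; first by move=> x s s'; rewrite trans_lower_ge0 ?setU11.
split; first by move=> x s; rewrite sum_trans_lower ?setU11.
move=> A B _ _ x y xA yB; under eq_bigr do rewrite -mulr_sumr.
rewrite sum_Nset -(sum_sup_mob (fun A' => p x y A' B) A) /=.
apply: eq_bigr => A' /subsetP AA'.
rewrite -sum_sup_mobius -qmarg_sum_trans_lower ?AA' //.
rewrite -(falmagne_lower_set qmarg_ge0 qmarg_sum1 (AA' x xA)) mulr_suml.
by apply: eq_bigr => s /eqP ->.
Qed.

End Sufficiency.

Theorem theorem5 (R : realType) (X : finType)
  (p : X -> X -> {set X} -> {set X} -> R) :
  is_rjcr p ->
  (cdru_consistent p <-> complete_monotonicity p /\ marginality p).
Proof.
move=> p_rjcr; split; last by case=> p_cm p_marg; apply: complete_monotone_marginal_cdru.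
case=> nu [t [nu_ge0 [_ [t_ge0 [t_sum1 p_cdru]]]]].
split; first exact: cdru_complete_monotonicity p_cdru nu_ge0 t_ge0.
exact: cdru_marginality p_cdru t_sum1.
Qed.
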